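(* Let $P$ be a span program and $x$ an input, and let $S,T$ be positive-definite diagonal $|J|\times|J|$ matrices. Then $$\mathrm{wsize}_{S\sqrt{1+T}}(P,x)\le\mathrm{wsize}_S(P,x)\,(1+\|T\|),\qquad \mathrm{wsize}_{\sqrt{S^2+T^2}}(P,x)\le\mathrm{wsize}_S(P,x)+O(\|T\|^2),$$ where the constant in $O(\cdot)$ depends only on $P$. In particular, fix input complexities $U_i$ with grouped input complexities $\tilde U_j$. Let $\tilde U'_j>0$ ($j\in J$) satisfy $\tilde U'_j\lesssim\tilde U_j$ for all $j$, and let $\tilde U'=\sum_j\tilde U'_j|j\rangle\langle j|$. Then $$\mathrm{wsize}_{\sqrt{\tilde U'}}(P,x)\lesssim\mathrm{wsize}_{\sqrt{\tilde U}}(P,x)=\mathrm{wsize}(P,x).$$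
   Context: A span program $P$ has target $t=(1,0,\dots,0)\in\mathbb{C}^m$ and vectors $v_j$ ($j\in J$) labeled by literal sets $X_j$. Grouped input $j$ is true on $x$ iff all literals in $X_j$ are true. We set $f_P(x)=1$ iff $t$ is in the span of the true $v_j$. Let $\Pi=\sum_{j\text{ true}}|j\rangle\langle j|$ and $A=\sum_j|v_j\rangle\langle j|$. For positive-definite diagonal $S$: - if $f_P(x)=1$, $\mathrm{wsize}_S(P,x)=\min\{\|Sw\|^2:A\Pi w=t\}$; - if $f_P(x)=0$, $\mathrm{wsize}_S(P,x)=\min\{\|SA^\dagger w'\|^2:\langle t|w'\rangle=1,\ \Pi A^\dagger w'=0\}$. Input complexities are positive reals $U_i$, one for each literal occurrence $i\in I_j$ of $X_j$. Grouped input complexities are - $\tilde U_j=\max\{\sum_{i\in I_j}U_i,1\}$ if $j$ is true; - $\tilde U_j=(\sum_{i\in I_j\text{ false}}U_i^{-1})^{-1}$ otherwise. Set $\tilde U=\sum_j\tilde U_j|j\rangle\langle j|$ and $\mathrm{wsize}(P,x)=\mathrm{wsize}_{\sqrt{\tilde U}}(P,x)$. Notation $a\lesssim b$, relative to a real parameter $\lambda$ and the complexities $U_i$: there exist constants $c_1,c_2$ such that $a\le c_1+b(1+c_2|\lambda|\max_iU_i)$. In the conclusion, the constants may depend on those in the hypothesis and on $P$. *)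

From HB Require Import structures.
From mathcomp Require Import all_boot all_order all_algebra.
From mathcomp Require Import boolp classical_sets reals.
From mathcomp.real_closed Require Import complex.

Set Implicit Arguments.
Unset Strict Implicit.
Unset Printing Implicit Defensive.

Import Order.TTheory GRing.Theory Num.Theory.
Local Open Scope ring_scope.

(* A literal over n Boolean input variables: (i, b) stands for "x_i = b",
   i.e. (i,true) is x_i and (i,false) is (not x_i). *)
Definition literal (n : nat) := ('I_n * bool)%type.

Definition lit_true (n : nat) (x : {ffun 'I_n -> bool}) (l : literal n) : bool :=
  x l.1 == l.2.

(* A span program with target space C^(m.+1), index set J = 'I_k,
   vectors v_j = column j of spA, labelled by literal sets spX j. *)
Record spanprog (R : realType) (n m k : nat) := SpanProg {
  spA : 'M[R[i]]_(m.+1, k);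
  spX : 'I_k -> {set literal n}
}.

Section SpanProgDefs.
Variables (R : realType) (n m k : nat) (P : spanprog R n m k).

Definition target : 'cV[R[i]]_(m.+1) := \col_(a < m.+1) (a == ord0)%:R.

Definition adjmx (p q : nat) (M : 'M[R[i]]_(p, q)) : 'M[R[i]]_(q, p) :=
  map_mx (@conjc R) M^T.

Definition jtrue (x : {ffun 'I_n -> bool}) (j : 'I_k) : bool :=
  [forall l in spX P j, lit_true x l].

Definition PiM (x : {ffun 'I_n -> bool}) : 'M[R[i]]_k :=
  diag_mx (\row_j (jtrue x j)%:R).

Definition fP (x : {ffun 'I_n -> bool}) : Prop :=
  exists w : 'cV[R[i]]_k, spA P *m PiM x *m w = target.

Definition sqn (z : R[i]) : R := complex.Re z ^+ 2 + complex.Im z ^+ 2.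

(* ||S w||^2 for S the positive diagonal matrix with diagonal s *)
Definition wnorm (s : 'I_k -> R) (w : 'cV[R[i]]_k) : R :=
  \sum_j s j ^+ 2 * sqn (w j ord0).

Definition pos_witness_sizes (x : {ffun 'I_n -> bool}) (s : 'I_k -> R) : set R :=
  [set r | exists w : 'cV[R[i]]_k, spA P *m PiM x *m w = target /\ r = wnorm s w].

Definition neg_witness_sizes (x : {ffun 'I_n -> bool}) (s : 'I_k -> R) : set R :=
  [set r | exists w' : 'cV[R[i]]_(m.+1),
     (adjmx target *m w') ord0 ord0 = 1 /\
     PiM x *m adjmx (spA P) *m w' = 0 /\
     r = wnorm s (adjmx (spA P) *m w')].

(* wsize_S(P,x), S = diag(s); the minimum is written as an infimum *)
Definition wsize (x : {ffun 'I_n -> bool}) (s : 'I_k -> R) : R :=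
  if `[< fP x >] then inf (pos_witness_sizes x s) else inf (neg_witness_sizes x s).

Definition diag_opnorm (t : 'I_k -> R) : R := \big[Num.max/0]_j `|t j|.

(* Input complexities: U j l for each literal occurrence l in X_j. *)
Definition grouped_cplx (x : {ffun 'I_n -> bool}) (U : 'I_k -> literal n -> R)
    (j : 'I_k) : R :=
  if jtrue x j then Num.max (\sum_(l in spX P j) U j l) 1
  else (\sum_(l in spX P j | ~~ lit_true x l) (U j l)^-1)^-1.

Definition maxU (U : 'I_k -> literal n -> R) : R :=
  \big[Num.max/0]_j \big[Num.max/0]_(l in spX P j) U j l.

Definition wsizeU (x : {ffun 'I_n -> bool}) (U : 'I_k -> literal n -> R) : R :=
  wsize x (fun j => Num.sqrt (grouped_cplx x U j)).

End SpanProgDefs.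

(* a <~ b relative to lambda and U, with explicit constants c1 c2:
   a <= c1 + b (1 + c2 |lambda| max_i U_i) *)
Definition lesssim_with (R : realType) (c1 c2 lam mU a b : R) : Prop :=
  a <= c1 + b * (1 + c2 * `|lam| * mU).

From HB Require Import structures.
From mathcomp Require Import all_boot all_order all_algebra.
From mathcomp Require Import boolp classical_sets reals.
From mathcomp.real_closed Require Import complex.
From mathcomp Require Import ring lra.
Import Order.TTheory GRing.Theory Num.Theory.
Local Open Scope ring_scope.

(* If S'^2 <= a S^2 + b entrywise then ||S' w||^2 <= a ||S w||^2 + b ||w||^2, so
   all three inequalities follow once every witness can be replaced by one that
   is coordinatewise no larger in modulus and whose entries are bounded by a
   constant depending only on P.  The witnesses form an affine space.  A
   witness that is not determined by its support lies on a line of witnesses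
   inside its support; it is then dominated by, or a sign-preserving convex
   combination of, the points where that line first leaves the closed orthant
   of the witness, which have smaller support.  Induction on the support thus
   reduces everything to the witnesses determined by their support, of which
   there are finitely many. *)

Lemma finite_uniform_bound (R : realType) (T : finType) (Q : T -> R -> Prop) :
  (forall x c c', c <= c' -> Q x c -> Q x c') -> (forall x, exists c, Q x c) ->
  exists c, forall x, Q x c.
Proof.
move=> Qmono Qex.
suff [c Qc] : exists c, forall x, x \in enum T -> Q x c.
  by exists c => x; apply: Qc; rewrite mem_enum.
elim: (enum T) => [|a s [c Qc]]; first by exists 0.
have [ca Qa] := Qex a.
exists (Num.max c ca) => x; rewrite inE => /orP[/eqP->|xs].
  by apply: Qmono Qa; rewrite le_max lexx orbT.
by apply: Qmono (Qc x xs); rewrite le_max lexx.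
Qed.

Lemma norm_le_of_mul (R : realDomainType) (a b : R) :
  b != 0 -> 0 <= a * b -> a * b <= b * b -> `|a| <= `|b|.
Proof.
move=> b0 ab_ge0 ab_le; have b_gt0 : 0 < `|b| by rewrite normr_gt0.
rewrite -(ler_pM2r b_gt0) -!normrM.
by rewrite (ger0_norm ab_ge0) ger0_norm // -expr2 sqr_ge0.
Qed.

Lemma normD_same_sign (R : realDomainType) (u v : R) :
  0 <= u * v -> `|u + v| = `|u| + `|v|.
Proof.
move=> uv; have [u0|u0] := leP 0 u.
  have [v0|v0] := leP 0 v; first by rewrite !ger0_norm ?addr_ge0.
  have -> : u = 0 by apply/eqP; rewrite eq_le u0 andbT; nra.
  by rewrite add0r normr0 add0r.
have v0 : v <= 0 by nra.
have uv0 : u + v <= 0 by lra.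
by rewrite !ler0_norm ?(ltW u0) // opprD.
Qed.

Lemma sqr_le_sqr_norm (R : realDomainType) (a b : R) :
  `|a| <= `|b| -> a ^+ 2 <= b ^+ 2.
Proof.
move=> ab; rewrite -(real_normK (num_real a)) -(real_normK (num_real b)).
by rewrite lerXn2r ?nnegrE.
Qed.

Section DominatedBoundedPoint.
Variables (R : realType) (I : finType) (L : (I -> R) -> Prop).
Hypothesis L_affine : forall (y1 y2 : I -> R) (tau : R), L y1 -> L y2 ->
  L (fun i => y1 i + tau * (y2 i - y1 i)).

Definition supp (y : I -> R) : {set I} := [set i | y i != 0].

(* The vectors of [L] determined by their support, i.e. the vertices of the
   intersections of [L] with closed orthants. *)
Definition basic (v : I -> R) := L v /\
  forall v', L v' -> (forall i, v i = 0 -> v' i = 0) -> forall i, v' i = v i.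

Definition shrinkable (M : R) (y : I -> R) :=
  exists2 y0, L y0 & forall i, `|y0 i| <= `|y i| /\ `|y0 i| <= M.

Lemma basic_bounded : exists M, forall v, basic v -> forall i, `|v i| <= M.
Proof.
have [M hM] : exists M, forall S v, basic v -> supp v = S -> forall i, `|v i| <= M.
  apply: (@finite_uniform_bound _ _
    (fun S M => forall v, basic v -> supp v = S -> forall i, `|v i| <= M)).
    by move=> S c c' le h v bv sv i; apply: le_trans (h v bv sv i) le.
  move=> S; have [[v0 [bv0 sv0]]|nex] := pselect (exists v, basic v /\ supp v = S).
    exists (\sum_i `|v0 i|) => v bv sv i.
    have -> : v i = v0 i.
      apply: (bv0.2 v bv.1) => l v0l.
      have : l \notin supp v by rewrite sv -sv0 inE v0l eqxx.
      by rewrite inE negbK => /eqP.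
    by rewrite (bigD1 i) //= lerDl sumr_ge0.
  by exists 0 => v bv sv; exfalso; apply: nex; exists v.
by exists M => v bv i; apply: (hM (supp v)).
Qed.

Lemma supp_shrink (y y' : I -> R) i0 :
  (forall i, y i = 0 -> y' i = 0) -> y' i0 = 0 -> y i0 != 0 ->
  (#|supp y'| < #|supp y|)%N.
Proof.
move=> y'0 y'i0 yi0.
have sub : supp y' \subset supp y :\ i0.
  apply/fintype.subsetP=> i; rewrite !inE => y'i; apply/andP; split.
    by apply: contraNneq y'i => ->; rewrite y'i0.
  by apply: contraNneq y'i => /y'0 ->.
by have := subset_leq_card sub; rewrite (cardsD1 i0 (supp y)) inE yi0.
Qed.

(* Move from [y] along [z] until the first coordinate that [z] pulls towards
   zero vanishes; no coordinate changes sign on the way. *)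
Lemma first_zero_on_line {y z : I -> R} : (exists i, z i * y i < 0) ->
  exists2 t, 0 < t & (exists2 i0, z i0 * y i0 < 0 & y i0 + t * z i0 = 0) /\
    forall i, 0 <= (y i + t * z i) * y i.
Proof.
move=> [i1 Ni1].
case: (@arg_minP _ _ _ i1 (fun i => z i * y i < 0) (fun i => - y i / z i) Ni1).
move=> i0 /= Ni0 i0_min.
have zi0 : z i0 != 0 by apply: contraTneq Ni0 => ->; rewrite mul0r ltxx.
have t_gt0 : 0 < - y i0 / z i0.
  have -> : - y i0 / z i0 = - (z i0 * y i0) / z i0 ^+ 2 by field.
  by rewrite divr_gt0 ?oppr_gt0 // exprn_even_gt0 //= zi0.
exists (- y i0 / z i0) => //; split; first by exists i0; rewrite // mulfVK ?subrr.
move: t_gt0; set t := - y i0 / z i0 => t_gt0 i.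
have [Ni|zy] := ltP (z i * y i) 0; last by nra.
have zi : z i != 0 by apply: contraTneq Ni => ->; rewrite mul0r ltxx.
have le_ratio : t <= - y i / z i := i0_min i Ni.
have : - y i / z i * (z i * y i) <= t * (z i * y i).
  exact: (ler_wnM2r (ltW Ni) le_ratio).
rewrite mulrA mulfVK //; nra.
Qed.

Lemma shrinkable_dominated M (y y' : I -> R) :
  (forall i, `|y' i| <= `|y i|) -> shrinkable M y' -> shrinkable M y.
Proof.
move=> dom [y0 Ly0 h]; exists y0 => // i.
by have [h1 h2] := h i; split=> //; apply: le_trans h1 (dom i).
Qed.

Lemma shrinkable_convex M (y ya yb : I -> R) (lam : R) : 0 <= lam <= 1 ->
  (forall i, 0 <= ya i * yb i) -> (forall i, y i = ya i + lam * (yb i - ya i)) ->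
  shrinkable M ya -> shrinkable M yb -> shrinkable M y.
Proof.
move=> lam01 same yE [ya0 La ha] [yb0 Lb hb].
exists (fun i => ya0 i + lam * (yb0 i - ya0 i)); first exact: L_affine.
move=> i; have [ha1 ha2] := ha i; have [hb1 hb2] := hb i.
have /andP[l0 l1] := lam01; rewrite -subr_ge0 in l1.
have le_conv : `|ya0 i + lam * (yb0 i - ya0 i)| <= (1 - lam) * `|ya0 i| + lam * `|yb0 i|.
  have -> : ya0 i + lam * (yb0 i - ya0 i) = (1 - lam) * ya0 i + lam * yb0 i by ring.
  by rewrite (le_trans (ler_normD _ _)) // !normrM (ger0_norm l0) (ger0_norm l1).
split; apply: le_trans le_conv _.
  have -> : y i = (1 - lam) * ya i + lam * yb i by rewrite yE; ring.
  rewrite normD_same_sign; last by rewrite mulrACA mulr_ge0 // mulr_ge0.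
  rewrite !normrM (ger0_norm l0) (ger0_norm l1).
  by apply: lerD; apply: ler_wpM2l.
have -> : M = (1 - lam) * M + lam * M by ring.
by apply: lerD; apply: ler_wpM2l.
Qed.

(* Either moving along [z] shrinks every coordinate, or [y] is a convex
   combination of the first zero-hitting points in both directions; these have
   the signs of [y] and smaller supports. *)
Lemma shrinkable_line M (y z : I -> R) :
  (forall tau, L (fun i => y i + tau * z i)) -> (forall i, y i = 0 -> z i = 0) ->
  (exists i, z i * y i < 0) ->
  (forall y', L y' -> (#|supp y'| < #|supp y|)%N -> shrinkable M y') ->
  shrinkable M y.
Proof.
move=> Lline z0 Nz IH.
have endpoint : forall z', (forall i, y i = 0 -> z' i = 0) -> forall t,
    (exists2 i0, z' i0 * y i0 < 0 & y i0 + t * z' i0 = 0) ->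
    (#|supp (fun i => (y i + t * z' i)%R)| < #|supp y|)%N.
  move=> z' z'0 t [i0 Ni0 vanish].
  apply: (@supp_shrink _ (fun i => y i + t * z' i) _ _ vanish).
    by move=> i /[dup] /z'0 -> ->; rewrite mulr0 addr0.
  by apply: contraTneq Ni0 => ->; rewrite mulr0 ltxx.
have [t1 t1_gt0 [hit1 sign1]] := first_zero_on_line Nz.
have Sa := IH _ (Lline t1) (endpoint z z0 t1 hit1).
have [[j Pj]|noP] := pselect (exists j, 0 < z j * y j); last first.
  apply: shrinkable_dominated Sa => i.
  have [yi0|yi] := eqVneq (y i) 0; first by rewrite yi0 (z0 _ yi0) mulr0 addr0.
  have zy : z i * y i <= 0 by rewrite leNgt; apply/negP => zy; apply: noP; exists i.
  by apply: norm_le_of_mul yi (sign1 i) _; nra.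
have Nmz : exists i, - z i * y i < 0 by exists j; rewrite mulNr oppr_lt0.
have mz0 : forall i, y i = 0 -> - z i = 0 by move=> i /z0 ->; rewrite oppr0.
have [t2 t2_gt0 [hit2 sign2]] := first_zero_on_line Nmz.
have Sb : shrinkable M (fun i => y i + - t2 * z i).
  apply: IH; first exact: Lline.
  have -> : (fun i => y i + - t2 * z i) = (fun i => y i + t2 * - z i).
    by apply/funext=> i; ring.
  exact: endpoint mz0 t2 hit2.
apply: (@shrinkable_convex M y _ _ (t1 / (t1 + t2)) _ _ _ Sa Sb).
- have t12 : 0 < t1 + t2 by rewrite addr_gt0.
  rewrite divr_ge0 ?(ltW t1_gt0) ?(ltW t12) //=.
  by rewrite (ler_pdivrMr _ _ t12) mul1r lerDl ltW.
- move=> i; have [yi0|yi] := eqVneq (y i) 0; first by rewrite yi0 (z0 _ yi0); lra.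
  have := sign1 i; have := sign2 i; rewrite mulNr mulrN => s2 s1.
  have : 0 < y i ^+ 2 by rewrite exprn_even_gt0 //= yi.
  nra.
- by move=> i; field; rewrite lt0r_neq0 // addr_gt0.
Qed.

Lemma dominated_bounded_point : exists M, forall y, L y -> shrinkable M y.
Proof.
have [M hM] := basic_bounded; exists M => y.
have [N] := ubnP #|supp y|; elim: N y => // N IH y /ltnSE suppN Ly.
have [bY|nbY] := pselect (basic y); first by exists y => [//|i]; split=> //; apply: hM.
have [y2 Ly2 [y20 [i1 ne]]] : exists2 y2, L y2 &
    (forall i, y i = 0 -> y2 i = 0) /\ exists i, y2 i != y i.
  apply: contra_notP nbY => nex; split=> // v' Lv' v'0 i; apply/eqP.
  by apply: contraT => ne; case: nex; exists v' => //; split=> //; exists i.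
pose z i := y2 i - y i.
have z0 : forall i, y i = 0 -> z i = 0 by move=> i yi0; rewrite /z yi0 y20 ?subrr.
have IH' y' : L y' -> (#|supp y'| < #|supp y|)%N -> shrinkable M y'.
  by move=> Ly' lt; apply: IH => //; apply: leq_trans lt suppN.
have zy1 : z i1 * y i1 != 0.
  rewrite mulf_neq0 ?subr_eq0 //; apply: contraNneq ne => yi0.
  by rewrite yi0 y20.
have [neg|pos] := ltP (z i1 * y i1) 0.
  apply: (@shrinkable_line M y z) IH'; last by exists i1.
    by move=> tau; apply: L_affine.
  exact: z0.
apply: (@shrinkable_line M y (fun i => - z i)) IH'.
- move=> tau; have := L_affine y y2 (- tau) Ly Ly2.
  by congr L; apply/funext=> i; rewrite /z; ring.
- by move=> i /z0 ->; rewrite oppr0.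
- by exists i1; rewrite mulNr oppr_lt0 lt_def zy1.
Qed.

End DominatedBoundedPoint.

Lemma inf_le_affine (R : realType) (A B : set R) (al be : R) :
  0 < al -> 0 <= be -> (forall r, A r -> 0 <= r) -> (forall r, B r -> 0 <= r) ->
  ((B !=set0)%classic -> (A !=set0)%classic) ->
  (forall r, A r -> exists2 r', B r' & r' <= al * r + be) ->
  inf B <= al * inf A + be.
Proof.
move=> al_gt0 be_ge0 A_ge0 B_ge0 BA AB.
have [[r0 Ar0]|A0] := pselect (A !=set0)%classic; last first.
  have -> : A = set0 by apply/seteqP; split=> // r Ar; case: A0; exists r.
  have -> : B = set0 by apply/seteqP; split=> // r Br; case: A0; apply: BA; exists r.
  by rewrite inf0 mulr0 add0r.
have B_lb : has_lbound B by exists 0 => r /B_ge0.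
have : (inf B - be) / al <= inf A.
  apply: lb_le_inf; first by exists r0.
  move=> r /AB [r' Br' le]; have := ge_inf B_lb Br'.
  by rewrite ler_pdivrMr //; lra.
by rewrite ler_pdivrMr //; lra.
Qed.

Lemma sqn_ge0 {R : realType} (z : R[i]) : 0 <= sqn z.
Proof. by rewrite /sqn addr_ge0 ?sqr_ge0. Qed.

Lemma wnorm_ge0 {R : realType} {k : nat} (s : 'I_k -> R) (w : 'cV[R[i]]_k) :
  0 <= wnorm s w.
Proof. by rewrite /wnorm sumr_ge0 // => j _; rewrite mulr_ge0 ?sqr_ge0 ?sqn_ge0. Qed.

Definition re_im {R : realType} {k : nat} (w : 'cV[R[i]]_k) (p : 'I_k * bool) : R :=
  if p.2 then complex.Im (w p.1 ord0) else complex.Re (w p.1 ord0).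

Lemma re_im_affine (R : realType) (k : nat) (u1 u2 : 'cV[R[i]]_k) (tau : R) p :
  re_im (u1 + (tau%:C)%C *: (u2 - u1)) p = re_im u1 p + tau * (re_im u2 p - re_im u1 p).
Proof.
rewrite /re_im !mxE.
by case: (u1 _ _) => a b; case: (u2 _ _) => c d; case: p.2 => /=; ring.
Qed.

Lemma sqn_re_im (R : realType) (k : nat) (w : 'cV[R[i]]_k) j :
  sqn (w j ord0) = re_im w (j, false) ^+ 2 + re_im w (j, true) ^+ 2.
Proof. by []. Qed.

Section WitnessSizes.
Variables (R : realType) (k q : nat) (W : 'cV[R[i]]_q -> Prop)
  (g : 'cV[R[i]]_q -> 'cV[R[i]]_k).
Hypothesis W_affine : forall w1 w2 (tau : R), W w1 -> W w2 ->
  W (w1 + (tau%:C)%C *: (w2 - w1)).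
Hypothesis g_affine : forall w1 w2 (tau : R),
  g (w1 + (tau%:C)%C *: (w2 - w1)) = g w1 + (tau%:C)%C *: (g w2 - g w1).

Definition witness_sizes (s : 'I_k -> R) : set R :=
  [set r | exists w, W w /\ r = wnorm s (g w)].

Lemma bounded_witness : exists2 B, 0 <= B & forall w, W w -> exists2 w0, W w0 &
  forall j, sqn (g w0 j ord0) <= sqn (g w j ord0) /\ sqn (g w0 j ord0) <= B.
Proof.
pose L y := exists2 w, W w & y = re_im (g w).
have L_affine y1 y2 (tau : R) : L y1 -> L y2 -> L (fun p => y1 p + tau * (y2 p - y1 p)).
  move=> [w1 W1 ->] [w2 W2 ->]; exists (w1 + (tau%:C)%C *: (w2 - w1)); first exact: W_affine.
  by apply/funext=> p; rewrite g_affine re_im_affine.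
have [M hM] := @dominated_bounded_point R _ L L_affine.
exists (2 * M ^+ 2) => [|w Ww]; first by rewrite mulr_ge0 ?sqr_ge0.
have [_ [w0 W0 ->] dom] := hM _ (ex_intro2 _ _ w Ww erefl).
exists w0 => // j; rewrite !sqn_re_im; split.
  by apply: lerD; apply: sqr_le_sqr_norm; [case: (dom (j, false)) | case: (dom (j, true))].
have le_M p : re_im (g w0) p ^+ 2 <= M ^+ 2.
  have [_ le] := dom p; apply: sqr_le_sqr_norm.
  by rewrite (ger0_norm (le_trans (normr_ge0 _) le)).
by have := le_M (j, false); have := le_M (j, true); lra.
Qed.

Lemma inf_witness_sizes_le : exists2 C, 0 <= C & forall (s s' : 'I_k -> R) (al be : R),
  0 < al -> 0 <= be -> (forall j, s' j ^+ 2 <= al * s j ^+ 2 + be) ->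
  inf (witness_sizes s') <= al * inf (witness_sizes s) + be * C.
Proof.
have [B B_ge0 reduce] := bounded_witness.
exists (k%:R * B) => [|s s' al be al_gt0 be_ge0 s's]; first by rewrite mulr_ge0.
apply: inf_le_affine => //; first by rewrite mulr_ge0 // mulr_ge0.
- by move=> r [w [_ ->]]; apply: wnorm_ge0.
- by move=> r [w [_ ->]]; apply: wnorm_ge0.
- by move=> [r [w [Ww _]]]; exists (wnorm s (g w)), w.
move=> r [w [Ww ->]]; have [w0 W0 dom] := reduce w Ww.
exists (wnorm s' (g w0)); first by exists w0.
have -> : k%:R * B = \sum_(j < k) B by rewrite sumr_const card_ord mulr_natl.
rewrite /wnorm mulr_sumr mulr_sumr -big_split; apply: ler_sum => j _ /=.
have [le_w le_B] := dom j; have q0 := sqn_ge0 (g w0 j ord0).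
apply: le_trans (ler_wpM2r q0 (s's j)) _.
rewrite mulrDl mulrA; apply: lerD; apply: ler_wpM2l => //.
by rewrite mulr_ge0 ?sqr_ge0 ?ltW.
Qed.

End WitnessSizes.

Section SpanProgram.
Variables (R : realType) (n m k : nat) (P : spanprog R n m k).

Definition wsize_scaling_bound (x : {ffun 'I_n -> bool}) (C : R) :=
  forall (s s' : 'I_k -> R) (al be : R),
  0 < al -> 0 <= be -> (forall j, s' j ^+ 2 <= al * s j ^+ 2 + be) ->
  wsize P x s' <= al * wsize P x s + be * C.

Lemma wsize_scaling_bound_le x C C' :
  C <= C' -> wsize_scaling_bound x C -> wsize_scaling_bound x C'.
Proof.
move=> CC' hC s s' al be al_gt0 be_ge0 s's.
by apply: le_trans (hC _ _ _ _ al_gt0 be_ge0 s's) _; rewrite lerD2l ler_wpM2l.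
Qed.

Lemma mulmx_affine {p q r : nat} (A : 'M[R[i]]_(p, q)) (w1 w2 : 'M[R[i]]_(q, r)) (tau : R) :
  A *m (w1 + (tau%:C)%C *: (w2 - w1)) = A *m w1 + (tau%:C)%C *: (A *m w2 - A *m w1).
Proof. by rewrite mulmxDr -scalemxAr mulmxBr. Qed.

Lemma wsize_scaling_bound_at x : exists C, wsize_scaling_bound x C.
Proof.
pose Wpos w := spA P *m PiM P x *m w = target R m.
have [Cp Cp_ge0 pos] : exists2 C, 0 <= C & forall s s' al be,
    0 < al -> 0 <= be -> (forall j, s' j ^+ 2 <= al * s j ^+ 2 + be) ->
    inf (pos_witness_sizes P x s') <= al * inf (pos_witness_sizes P x s) + be * C.
  apply: (@inf_witness_sizes_le R k k Wpos id) => // w1 w2 tau.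
  by rewrite /Wpos mulmx_affine => -> ->; rewrite subrr scaler0 addr0.
pose Wneg (w : 'cV[R[i]]_m.+1) :=
  (adjmx (target R m) *m w) ord0 ord0 = 1 /\ PiM P x *m adjmx (spA P) *m w = 0.
have [Cn Cn_ge0 neg] : exists2 C, 0 <= C & forall s s' al be,
    0 < al -> 0 <= be -> (forall j, s' j ^+ 2 <= al * s j ^+ 2 + be) ->
    inf (neg_witness_sizes P x s') <= al * inf (neg_witness_sizes P x s) + be * C.
  have negE s :
      neg_witness_sizes P x s = @witness_sizes R k m.+1 Wneg (mulmx (adjmx (spA P))) s.
    apply/seteqP; split=> r.
      by case=> w [? [? ->]]; exists w.
    by case=> w [[? ?] ->]; exists w.
  have Wneg_affine w1 w2 (tau : R) :
      Wneg w1 -> Wneg w2 -> Wneg (w1 + (tau%:C)%C *: (w2 - w1)).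
    move=> [t1 Pi1] [t2 Pi2]; rewrite /Wneg !mulmx_affine Pi1 Pi2.
    have -> : adjmx (target R m) *m w2 = adjmx (target R m) *m w1.
      by apply/matrixP => i j; rewrite !ord1 t1 t2.
    by rewrite !subrr !scaler0 !addr0.
  have [C C_ge0 le] :=
    @inf_witness_sizes_le R k m.+1 Wneg _ Wneg_affine (mulmx_affine (adjmx (spA P))).
  by exists C => // s s'; rewrite !negE; apply: le.
exists (Cp + Cn) => s s' al be al_gt0 be_ge0 s's; rewrite /wsize; case: ifP => _.
  apply: le_trans (pos _ _ _ _ al_gt0 be_ge0 s's) _.
  by rewrite lerD2l ler_wpM2l // lerDl.
apply: le_trans (neg _ _ _ _ al_gt0 be_ge0 s's) _.
by rewrite lerD2l ler_wpM2l // lerDr.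
Qed.

Lemma wsize_scaling_bound_uniform : exists C, forall x, wsize_scaling_bound x C.
Proof. exact: finite_uniform_bound wsize_scaling_bound_le wsize_scaling_bound_at. Qed.

End SpanProgram.

Lemma bigmax_ge0 (R : realDomainType) (I : finType) (Q : pred I) (F : I -> R) :
  0 <= \big[Num.max/0]_(j | Q j) F j.
Proof. by elim/big_rec: _ => // i y _ y_ge0; rewrite le_max y_ge0 orbT. Qed.

Lemma diag_opnorm_ge {R : realType} {k : nat} (t : 'I_k -> R) j :
  `|t j| <= diag_opnorm t.
Proof. by rewrite /diag_opnorm (bigD1 j) //= le_max lexx. Qed.

Lemma diag_opnorm_ge0 {R : realType} {k : nat} (t : 'I_k -> R) : 0 <= diag_opnorm t.
Proof. exact: bigmax_ge0. Qed.

Lemma grouped_cplx_ge0 {R : realType} {n m k : nat} (P : spanprog R n m k) x U j :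
  (forall l, l \in spX P j -> 0 < U j l) -> 0 <= grouped_cplx P x U j.
Proof.
move=> U_gt0; rewrite /grouped_cplx; case: ifP => _; first by rewrite le_max ler01 orbT.
by rewrite invr_ge0 sumr_ge0 // => l /andP[/U_gt0 /ltW]; rewrite invr_ge0.
Qed.

Section Consequences.
Variables (R : realType) (n m k : nat) (P : spanprog R n m k).

Lemma wsize_mul_sqrt1D x (s t : 'I_k -> R) : (forall j, 0 <= 1 + t j) ->
  wsize P x (fun j => s j * Num.sqrt (1 + t j)) <= wsize P x s * (1 + diag_opnorm t).
Proof.
move=> t_ge; have [C hC] := @wsize_scaling_bound_uniform R n m k P.
have T_ge0 := diag_opnorm_ge0 t.
rewrite mulrC -[X in _ <= X]addr0 -(mul0r C); apply: hC => //; first lra.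
move=> j; rewrite addr0 exprMn sqr_sqrtr // mulrC ler_wpM2r ?sqr_ge0 // lerD2l.
exact: le_trans (ler_norm _) (diag_opnorm_ge t j).
Qed.

Lemma wsize_sqrtD : exists c, forall x (s t : 'I_k -> R),
  wsize P x (fun j => Num.sqrt (s j ^+ 2 + t j ^+ 2)) <= wsize P x s + c * diag_opnorm t ^+ 2.
Proof.
have [C hC] := @wsize_scaling_bound_uniform R n m k P; exists C => x s t.
rewrite -[X in X + _]mul1r [C * _]mulrC; apply: hC => //; first exact: sqr_ge0.
move=> j; rewrite sqr_sqrtr ?addr_ge0 ?sqr_ge0 // mul1r lerD2l.
by apply: sqr_le_sqr_norm; rewrite [X in _ <= X]ger0_norm ?diag_opnorm_ge0 ?diag_opnorm_ge.
Qed.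

Lemma wsize_lesssim (c1 c2 : R) : exists c1' c2' : R,
  forall x (U : 'I_k -> literal n -> R) (lam : R) (U' : 'I_k -> R),
    (forall j l, l \in spX P j -> 0 < U j l) -> (forall j, 0 < U' j) ->
    (forall j, lesssim_with c1 c2 lam (maxU P U) (U' j) (grouped_cplx P x U j)) ->
    lesssim_with c1' c2' lam (maxU P U) (wsize P x (fun j => Num.sqrt (U' j))) (wsizeU P x U).
Proof.
have [C hC] := @wsize_scaling_bound_uniform R n m k P.
exists (Num.max c1 0 * C), (Num.max c2 0) => x U lam U' U_gt0 U'_gt0 U'_le.
have c1_le : c1 <= Num.max c1 0 by rewrite le_max lexx.
have c2_le : c2 <= Num.max c2 0 by rewrite le_max lexx.
have mU_ge0 : 0 <= maxU P U by apply: bigmax_ge0.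
have c2lU_ge0 : 0 <= Num.max c2 0 * `|lam| * maxU P U.
  by rewrite !mulr_ge0 // le_max lexx orbT.
rewrite /lesssim_with /wsizeU addrC mulrC; apply: hC.
- lra.
- by rewrite le_max lexx orbT.
move=> j; have G_ge0 := grouped_cplx_ge0 P x U j (U_gt0 j).
rewrite (sqr_sqrtr G_ge0) (sqr_sqrtr (ltW (U'_gt0 j))).
apply: le_trans (U'_le j) _; rewrite addrC mulrC; apply: lerD => //.
apply: ler_wpM2r => //; rewrite lerD2l.
by do 2 apply: ler_wpM2r => //.
Qed.

End Consequences.

Theorem lemmaA6 (R : realType) (n m k : nat) (P : spanprog R n m k) :
  (* first inequality *)
  (forall (x : {ffun 'I_n -> bool}) (s t : 'I_k -> R),
      (forall j, 0 < s j) -> (forall j, 0 < t j) ->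
      wsize P x (fun j => s j * Num.sqrt (1 + t j))
        <= wsize P x s * (1 + diag_opnorm t)) /\
  (* second inequality, constant depending only on P *)
  (exists c : R, forall (x : {ffun 'I_n -> bool}) (s t : 'I_k -> R),
      (forall j, 0 < s j) -> (forall j, 0 < t j) ->
      wsize P x (fun j => Num.sqrt (s j ^+ 2 + t j ^+ 2))
        <= wsize P x s + c * diag_opnorm t ^+ 2) /\
  (* the "in particular" consequence *)
  (forall c1 c2 : R, exists c1' c2' : R,
    forall (x : {ffun 'I_n -> bool}) (U : 'I_k -> literal n -> R) (lam : R)
           (U' : 'I_k -> R),
      (forall j l, l \in spX P j -> 0 < U j l) ->
      (forall j, 0 < U' j) ->
      (forall j, lesssim_with c1 c2 lam (maxU P U) (U' j) (grouped_cplx P x U j)) ->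
      lesssim_with c1' c2' lam (maxU P U)
        (wsize P x (fun j => Num.sqrt (U' j))) (wsizeU P x U)).
Proof.
split.
  move=> x s t _ t_gt0; apply: wsize_mul_sqrt1D => j.
  by rewrite addr_ge0 ?ler01 ?ltW.
split; last exact: wsize_lesssim.
by have [c hc] := @wsize_sqrtD R n m k P; exists c => x s t _ _; apply: hc.
Qed.
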